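(* Fix an $\mathrm{HNN}_k$ architecture with parameter vector $\Theta\in\mathbb{R}^m$, and denote by $v_\Theta$ the corresponding network function. Let $\Omega\subset\mathbb{R}^d$ be a domain of finite measure. There exists a set $\mathcal N\subset\mathbb{R}^m$ such that: 1. if $\Theta_0\notin\mathcal N$, then for every sequence $\{\Theta_n\}_{n\in\mathbb{N}}\subset\mathbb{R}^m$ converging to $\Theta_0$, $v_{\Theta_n}\to v_{\Theta_0}$ in $L^2(\Omega)$; 2. if $\Omega$ is bounded, each $\Theta\in\mathcal N$ admits $\Theta'\notin\mathcal N$ satisfying $v_\Theta\equiv v_{\Theta'}$ in $\Omega$. Moreover, $\mathcal N$ is a finite union of subspaces of $\mathbb{R}^m$, each of dimension $m-d$ (in particular, $\mathcal N$ has Lebesgue measure zero).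
   Context: $\mathrm{HNN}_k$ networks are functions $v(x)=\Theta^k\circ\sigma\circ\Theta^{k-1}\circ\sigma\circ\cdots\circ\Theta^1\circ\sigma_s\circ\Theta^0(x)$, $x\in\mathbb{R}^d$, with affine maps $\Theta^j:\mathbb{R}^{n_j}\to\mathbb{R}^{n_{j+1}}$ ($n_0=d$, $n_{k+1}=1$) whose coefficients form the parameter vector $\Theta\in\mathbb{R}^m$, $\sigma=\mathrm{ReLU}$, and $\sigma_s=H$ the Heaviside function ($H(t)=1$ for $t\ge0$, $0$ for $t<0$); activations are applied componentwise. In particular the first layer is $x\mapsto(H(a_1\cdot x+b_1),\dots,H(a_\ell\cdot x+b_\ell))$ with $a_i\in\mathbb{R}^d$, $b_i\in\mathbb{R}$. *)

From HB Require Import structures.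
From mathcomp Require Import all_boot all_order all_algebra.
From mathcomp Require Import all_classical all_reals all_analysis.
Set Implicit Arguments. Unset Strict Implicit. Unset Printing Implicit Defensive.
Import Order.TTheory GRing.Theory Num.Theory.
Import numFieldNormedType.Exports.
Local Open Scope ring_scope.

Definition heaviside {R : realType} (t : R) : R := if 0 <= t then 1 else 0.
Definition relu {R : realType} (t : R) : R := Num.max t 0.

(* i-th coordinate of a row vector, seen as a nat-indexed sequence (0 beyond the length) *)
Definition coord_of {R : realType} (n : nat) (v : 'rV[R]_n) (p : nat) : R :=
  if (insub p : option 'I_n) is Some i then v 0 i else 0.

(* Input dimension d, hidden widths ns = [:: n_1; ...; n_k] (k = size ns), and
   n_{k+1} = 1.  The affine map Theta^j : R^{n_j} -> R^{n_{j+1}} has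
   n_{j+1} * (n_j + 1) coefficients.  Parameters are stored consecutively,
   layer by layer (Theta^0, Theta^1, ..., Theta^k); inside layer j, for each
   output neuron i the n_j weights come first, then the bias. *)
Fixpoint nparams_from (a : nat) (ws : seq nat) : nat :=
  match ws with
  | [::] => 0
  | b :: ws' => b * a.+1 + nparams_from b ws'
  end.

Definition hnn_nparams (d : nat) (ns : seq nat) : nat :=
  nparams_from d (ns ++ [:: 1]).

Definition affine_layer {R : realType} (P : nat -> R) (o a : nat)
    (x : nat -> R) (i : nat) : R :=
  \sum_(l < a) P (o + i * a.+1 + l) * x l + P (o + i * a.+1 + a).

Fixpoint relu_tail {R : realType} (P : nat -> R) (a : nat) (ws : seq nat)
    (o : nat) (x : nat -> R) : R :=
  match ws with
  | [::] => affine_layer P o a x 0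
  | b :: ws' => relu_tail P b ws' (o + b * a.+1)
                  (fun i => relu (affine_layer P o a x i))
  end.

(* v(x) = Theta^k o sigma o ... o Theta^1 o H o Theta^0 (x) *)
Definition hnn_eval {R : realType} (d : nat) (ns : seq nat) (P : nat -> R)
    (x : nat -> R) : R :=
  match ns with
  | [::] => 0
  | n1 :: ns' => relu_tail P n1 ns' (n1 * d.+1)
                   (fun i => heaviside (affine_layer P 0 d x i))
  end.

Definition hnn {R : realType} (d : nat) (ns : seq nat) (m : nat)
    (Theta : 'rV[R]_m) (x : 'rV[R]_d) : R :=
  hnn_eval d ns (coord_of Theta) (coord_of x).

(* Iterated one-dimensional Lebesgue integrals; for nonnegative Borel
   integrands this is the Lebesgue integral on R^d (Tonelli). *)
Fixpoint iter_lebesgue_integral {R : realType} (d : nat)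
    (F : (nat -> R) -> \bar R) : \bar R :=
  match d with
  | 0 => F (fun _ => 0)
  | d'.+1 => (\int[@lebesgue_measure R]_t
               iter_lebesgue_integral d'
                 (fun x => F (fun i => if i is j.+1 then x j else t)))%E
  end.

Definition lebesgue_integral_Rd {R : realType} (d : nat)
    (g : 'rV[R]_d -> \bar R) : \bar R :=
  iter_lebesgue_integral d (fun x => g (\row_(i < d) x (val i))).

Definition lebesgue_measure_Rd {R : realType} (d : nat) (A : set 'rV[R]_d) : \bar R :=
  lebesgue_integral_Rd (fun x => (\1_A x)%:E).

Definition L2dist2 {R : realType} (d : nat) (Omega : set 'rV[R]_d)
    (f g : 'rV[R]_d -> R) : \bar R :=
  lebesgue_integral_Rd (fun x => (\1_Omega x * (f x - g x) ^+ 2)%:E).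

Arguments hnn {R} d ns {m} Theta x.

From HB Require Import structures.
From mathcomp Require Import all_boot all_order all_algebra.
From mathcomp Require Import all_classical all_reals all_analysis.
From mathcomp Require Import measurable_realfun lra zify.
Set Implicit Arguments. Unset Strict Implicit. Unset Printing Implicit Defensive.
Import Order.TTheory GRing.Theory Num.Theory.
Import numFieldNormedType.Exports.
Local Open Scope classical_set_scope.
Local Open Scope ring_scope.

(* Fix x.  The map Theta |-> v_Theta(x) is continuous at every Theta0 for
   which x lies on none of the hyperplanes a_i . x + b_i = 0 of the Heaviside
   layer: elsewhere each H(a_i . x + b_i) is locally constant in Theta, and the
   remaining layers are continuous.  If no first-layer weight vector a_i of
   Theta0 vanishes, these hyperplanes are Lebesgue-null, so v_{Theta_n} -> v_{Theta0}
   almost everywhere; the networks are uniformly bounded along a convergent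
   sequence of parameters, so bounded convergence on the finite-measure set
   Omega gives L^2 convergence.  Hence N is the union over the neurons i of the
   subspaces {a_i = 0}, each of codimension d.  A neuron with a_i = 0 is the
   constant H(b_i), which on a bounded Omega is also produced by a nonzero
   weight vector, so every Theta in N has an equivalent Theta' outside N. *)

Section product_sigma_finite.
Local Open Scope ereal_scope.
Context d1 d2 (T1 : measurableType d1) (T2 : measurableType d2) (R : realType).
Variables (m1 : {sigma_finite_measure set T1 -> \bar R})
  (m2 : {sigma_finite_measure set T2 -> \bar R}).

(* The library's sigma-finiteness instance on [m1 \x m2] is shadowed by its
   instance for products of subprobabilities, so inference fails on [m1 \x m2];
   the alias [product_measure] carries the instance instead. *)
Definition product_measure := m1 \x m2.
HB.instance Definition _ := Measure.on product_measure.

Lemma sigma_finite_product_measure : sigma_finite setT product_measure.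
Proof.
have /sigma_finiteP[F [FT Fnd Ffin]] := sigma_finiteT m1.
have /sigma_finiteP[G [GT Gnd Gfin]] := sigma_finiteT m2.
exists (fun n => F n `*` G n); last first.
  move=> n; have [mF Fn] := Ffin n; have [mG Gn] := Gfin n.
  split; first exact: measurableX.
  by rewrite /product_measure product_measure1E // lte_mul_pinfty // ge0_fin_numE.
apply/seteqP; split=> // [[x y]] _.
have [i _ Fix] : (\bigcup_n F n) x by rewrite -FT.
have [j _ Gjy] : (\bigcup_n G n) y by rewrite -GT.
exists (maxn i j) => //; split.
- by move: x Fix; apply/subsetPset/Fnd/leq_maxl.
- by move: y Gjy; apply/subsetPset/Gnd/leq_maxr.
Qed.

HB.instance Definition _ :=
  Measure_isSigmaFinite.Build _ _ _ product_measure sigma_finite_product_measure.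

End product_sigma_finite.

Record sigma_finite_space (R : realType) := SigmaFiniteSpace {
  sfs_display : measure_display;
  sfs_type : measurableType sfs_display;
  sfs_measure : {sigma_finite_measure set sfs_type -> \bar R} }.

(* [R^0] is the point mass at [0] on [R] and [R^(d+1)] is [R * R^d]. *)
Fixpoint Rd_space (R : realType) (d : nat) : sigma_finite_space R :=
  match d with
  | 0 => SigmaFiniteSpace (\d_(0 : R) : {sigma_finite_measure set R -> \bar R})
  | d'.+1 => SigmaFiniteSpace (product_measure (@lebesgue_measure R)
                                 (sfs_measure (Rd_space R d')))
  end.

Notation Rd R d := (sfs_type (Rd_space R d)).
Notation lebesgue_Rd R d := (sfs_measure (Rd_space R d)).

Fixpoint Rd_coord (R : realType) (d : nat) : Rd R d -> nat -> R :=
  match d return Rd R d -> nat -> R with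
  | 0 => fun _ _ => 0
  | d'.+1 => fun p l => if l is l'.+1 then @Rd_coord R d' p.2 l' else p.1
  end.

Definition Rd_point {R : realType} {d : nat} (p : Rd R d) : 'rV[R]_d :=
  \row_(i < d) Rd_coord p i.

Definition hyperplane {R : realType} (d : nat) (a : nat -> R) (b : R) : set (Rd R d) :=
  [set p | \sum_(l < d) a l * Rd_coord p l + b = 0].
Arguments hyperplane {R} d a b.

Section lebesgue_Rd.
Variable R : realType.

Lemma iter_lebesgue_integralE (d : nat) (F : (nat -> R) -> \bar R) :
  (forall x, (0 <= F x)%E) ->
  measurable_fun [set: Rd R d] (fun p => F (Rd_coord p)) ->
  iter_lebesgue_integral d F = (\int[lebesgue_Rd R d]_p F (Rd_coord p))%E.
Proof.
elim: d F => [|d IH] F F_ge0 mF /=.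
  by rewrite integral_dirac // diracT mul1e.
rewrite fubini_tonelli1 //; apply: eq_integral => t _.
by rewrite IH //; exact: (measurable_fun_pair2 t mF).
Qed.

Lemma measurable_Rd_coord (d l : nat) :
  measurable_fun [set: Rd R d] (fun p => Rd_coord p l).
Proof.
elim: d l => [|d IH] [|l] /=; do ?exact: measurable_cst; first exact: measurable_fst.
exact: measurableT_comp (IH l) measurable_snd.
Qed.

Lemma coord_of_Rd_point (d : nat) (p : Rd R d) l :
  coord_of (Rd_point p) l = if (l < d)%N then Rd_coord p l else 0.
Proof.
rewrite /coord_of; case: insubP => [i _ <-|/negbTE -> //].
by rewrite mxE ltn_ord.
Qed.

Lemma measurable_coord_of_Rd_point (d l : nat) :
  measurable_fun [set: Rd R d] (fun p => coord_of (Rd_point p) l).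
Proof.
under eq_fun do rewrite coord_of_Rd_point.
by case: (l < d)%N; [exact: measurable_Rd_coord | exact: measurable_cst].
Qed.

Lemma measurable_affine_Rd_coord (d : nat) (a : nat -> R) (b : R) :
  measurable_fun [set: Rd R d] (fun p => \sum_(l < d) a l * Rd_coord p l + b).
Proof.
apply: measurable_funD; last exact: measurable_cst.
apply: measurable_sum => l; apply: measurable_funM; first exact: measurable_cst.
exact: measurable_Rd_coord.
Qed.

Lemma measurable_hyperplane d (a : nat -> R) (b : R) : measurable (hyperplane d a b).
Proof.
have := @measurable_affine_Rd_coord d a b measurableT _ (measurable_set1 0).
by rewrite setTI.
Qed.

Lemma xsection_hyperplane d (a : nat -> R) b t :
  xsection (hyperplane d.+1 a b) t = hyperplane d (a \o succn) (a 0%N * t + b).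
Proof.
apply/funext => y; rewrite /xsection /hyperplane /= inE /= big_ord_recl /=.
by rewrite addrCA addrA.
Qed.

Lemma hyperplane_null d (a : nat -> R) b :
  (exists2 l, (l < d)%N & a l != 0) -> lebesgue_Rd R d (hyperplane d a b) = 0%E.
Proof.
elim: d a b => [|d IH] a b [l ld al] //=.
rewrite /product_measure /product_measure1 /=.
under eq_integral do rewrite xsection_hyperplane.
have [[l' l'd al']|a'0] := pselect (exists2 l, (l < d)%N & a l.+1 != 0).
  by apply: integral0_eq => t _; apply: IH; exists l'.
have {}a'0 k : (k < d)%N -> a k.+1 = 0.
  by move=> kd; apply/eqP/contraT => ak; exfalso; apply: a'0; exists k.
have a0 : a 0%N != 0 by case: l ld al => // l ld al; rewrite a'0 ?eqxx in al.
(* Only the slice over [t = - b / a 0] is nonempty, and a point is Lebesgue-null. *)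
rewrite -(@integral_setD1 _ _ (- b / a 0%N)); first last.
- apply: (measurable_funS measurableT) => //.
  have := measurable_fun_xsection (lebesgue_Rd R d) (measurable_hyperplane d.+1 a b).
  by congr measurable_fun; apply/funext => t; rewrite /= xsection_hyperplane.
- exact: measurableD.
apply: integral0_eq => t [_ /= tb].
suff -> : hyperplane d (a \o succn) (a 0%N * t + b) = set0 by rewrite measure0.
apply/seteqP; split=> // y; rewrite /hyperplane /= big1 ?add0r => [/eqP|i _]; last first.
  by rewrite /= a'0 ?mul0r.
by rewrite addr_eq0 => /eqP tE; apply: tb; rewrite -tE mulrC mulKf.
Qed.

End lebesgue_Rd.

Section open_preimage.
Variable R : realType.

Definition rat_box (d : nat) (c : seq rat) (r : rat) : set (Rd R d) :=
  \bigcap_l (if (l < d)%N then [set p | `|Rd_coord p l - ratr (nth 0 c l)| < ratr r]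
             else setT).
Arguments rat_box : clear implicits.

Lemma measurable_rat_box d c r : measurable (rat_box d c r).
Proof.
apply: bigcapT_measurable => l; case: (l < d)%N => //.
rewrite -[X in measurable X]setTI.
have -> : [set p | `|Rd_coord p l - ratr (nth 0 c l)| < ratr r] =
    (fun p : Rd R d => Rd_coord p l) @^-1`
      `](ratr (nth 0 c l) - ratr r), (ratr (nth 0 c l) + ratr r)[.
  by apply/seteqP; split=> p /=; rewrite in_itv /= ltr_distl.
exact: measurable_Rd_coord.
Qed.

Lemma rat_box_in_open d (U : set 'rV[R]_d) (p : Rd R d) :
  open U -> U (Rd_point p) ->
  exists c r, rat_box d c r p /\ rat_box d c r `<=` Rd_point @^-1` U.
Proof.
move=> oU Up.
have /nbhs_ballP[e /= e_gt0 eU] : nbhs (Rd_point p) U by exact: open_nbhs_nbhs.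
have [r] : exists r : rat, ratr r \in `]0, e / 2[ by apply: rat_in_itvoo; rewrite divr_gt0.
rewrite in_itv /= => /andP[r_gt0 r_lt].
have /choice[c cE] l :
    exists q : rat, ratr q \in `](Rd_coord p l - ratr r), (Rd_coord p l + ratr r)[.
  by apply: rat_in_itvoo; rewrite ltrBlDr -addrA ltrDl addr_gt0.
have pc l : `|Rd_coord p l - ratr (c l)| < ratr r.
  by rewrite ltr_distlC; move: (cE l); rewrite in_itv.
exists (mkseq c d), r; split.
  by move=> l _; case: ifP => // ld /=; rewrite nth_mkseq.
move=> y yB; apply: eU; split=> // i j; rewrite !mxE /ball /=.
have := yB j I; rewrite ltn_ord /= nth_mkseq // => yc.
move: (pc j) yc; rewrite !ltr_norml => /andP[? ?] /andP[? ?].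
by apply/andP; split; lra.
Qed.

Lemma measurable_Rd_point_preimage d (U : set 'rV[R]_d) :
  open U -> measurable (Rd_point @^-1` U).
Proof.
move=> oU.
pose B (cr : seq rat * rat) := if pselect (rat_box d cr.1 cr.2 `<=` Rd_point @^-1` U)
  is left _ then rat_box d cr.1 cr.2 else set0.
have -> : Rd_point @^-1` U = \bigcup_cr B cr.
  apply/seteqP; split=> [p Up|p [cr _]]; last by rewrite /B; case: pselect => // sub /sub.
  have [c [r [Bp BU]]] := rat_box_in_open oU Up.
  by exists (c, r) => //; rewrite /B; case: pselect.
apply: countable_bigcupT_measurable; first exact: countableP.
by move=> cr; rewrite /B; case: pselect => _; [exact: measurable_rat_box|exact: measurable0].
Qed.

End open_preimage.

Section activations.
Variable R : realType.

Lemma measurable_heaviside : measurable_fun [set: R] heaviside.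
Proof.
have -> : @heaviside R = \1_`[0, +oo[.
  apply/funext => t; rewrite /heaviside indicE.
  by case: ifP => t0; [rewrite mem_set | rewrite memNset] => //=; rewrite in_itv /= t0.
by apply: measurable_indic; exact: measurable_itv.
Qed.

Lemma measurable_relu : measurable_fun [set: R] relu.
Proof.
have -> : @relu R = id \max cst 0 by [].
by apply: measurable_maxr => //; exact: measurable_cst.
Qed.

Lemma normr_heaviside_le1 (t : R) : `|heaviside t| <= 1.
Proof. by rewrite /heaviside; case: ifP; rewrite ?normr1 ?normr0. Qed.

Lemma normr_relu_le (t : R) : `|relu t| <= `|t|.
Proof. by rewrite /relu /Num.max; case: ifP; rewrite ?normr0. Qed.

Lemma cvg_heaviside (u : nat -> R) c : u @ \oo --> c -> c != 0 ->
  heaviside (u n) @[n --> \oo] --> heaviside c.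
Proof.
move=> uc c_neq0; apply: cvg_near_cst.
have [c_lt0|c_gt0|c0] := ltgtP c 0; last by rewrite c0 eqxx in c_neq0.
  apply: filterS (cvgr_lt c uc 0 c_lt0) => n un.
  by rewrite /heaviside !lt_geF.
apply: filterS (cvgr_gt c uc 0 c_gt0) => n un.
by rewrite /heaviside !ltW.
Qed.

Lemma cvg_relu (u : nat -> R) c : u @ \oo --> c -> relu (u n) @[n --> \oo] --> relu c.
Proof.
move=> uc; have relu_cont : {for c, continuous (@relu R)}.
  by apply: continuous_max; [exact: cvg_id | exact: cvg_cst].
exact: continuous_cvg relu_cont uc.
Qed.

End activations.

Section network_measurable.
Context (R : realType) dT (T : measurableType dT).

Lemma measurable_affine_layer (P : nat -> R) o a (x : T -> nat -> R) i :
  (forall l, measurable_fun [set: T] (fun t => x t l)) ->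
  measurable_fun [set: T] (fun t => affine_layer P o a (x t) i).
Proof.
move=> mx; apply: measurable_funD; last exact: measurable_cst.
by apply: measurable_sum => l; apply: measurable_funM; first exact: measurable_cst.
Qed.

Lemma measurable_relu_tail (P : nat -> R) ws a o (x : T -> nat -> R) :
  (forall l, measurable_fun [set: T] (fun t => x t l)) ->
  measurable_fun [set: T] (fun t => relu_tail P a ws o (x t)).
Proof.
elim: ws a o x => [|b ws IH] a o x mx /=; first exact: measurable_affine_layer.
apply: IH => l; apply: (measurableT_comp (f := @relu R) (@measurable_relu R)).
exact: measurable_affine_layer.
Qed.

Lemma measurable_hnn_eval d ns (P : nat -> R) (x : T -> nat -> R) :
  (forall l, measurable_fun [set: T] (fun t => x t l)) ->
  measurable_fun [set: T] (fun t => hnn_eval d ns P (x t)).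
Proof.
case: ns => [|n1 ns] mx /=; first exact: measurable_cst.
apply: measurable_relu_tail => l.
apply: (measurableT_comp (f := @heaviside R) (@measurable_heaviside R)).
exact: measurable_affine_layer.
Qed.

End network_measurable.

Section network_continuity.
Variables (R : realType) (Pn : nat -> nat -> R) (P : nat -> R).
Hypothesis PnP : forall k, Pn n k @[n --> \oo] --> P k.

Lemma cvg_affine_layer o a (xn : nat -> nat -> R) x i :
  (forall l, (l < a)%N -> xn n l @[n --> \oo] --> x l) ->
  affine_layer (Pn n) o a (xn n) i @[n --> \oo] --> affine_layer P o a x i.
Proof.
move=> xnx; apply: cvgD; last exact: PnP.
apply: cvg_big => [|l _]; first exact: add_continuous.
by apply: cvgM; [exact: PnP | exact: xnx].
Qed.

Lemma cvg_relu_tail ws a o (xn : nat -> nat -> R) x :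
  (forall l, (l < a)%N -> xn n l @[n --> \oo] --> x l) ->
  relu_tail (Pn n) a ws o (xn n) @[n --> \oo] --> relu_tail P a ws o x.
Proof.
elim: ws a o xn x => [|b ws IH] a o xn x xnx /=; first exact: cvg_affine_layer.
by apply: IH => l _; apply/cvg_relu/cvg_affine_layer.
Qed.

Lemma cvg_hnn_eval d n1 ns (x : nat -> R) :
  (forall i, (i < n1)%N -> affine_layer P 0 d x i != 0) ->
  hnn_eval d (n1 :: ns) (Pn n) x @[n --> \oo] --> hnn_eval d (n1 :: ns) P x.
Proof.
move=> x_off; apply: cvg_relu_tail => i i_lt.
by apply: cvg_heaviside (x_off i i_lt); apply: cvg_affine_layer => l _; exact: cvg_cst.
Qed.

End network_continuity.

Section network_bounds.
Variable R : realType.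

Lemma normr_affine_layer_le (K M : R) (P : nat -> R) o a (x : nat -> R) i :
  (forall k, `|P k| <= K) -> (forall l, (l < a)%N -> `|x l| <= M) ->
  `|affine_layer P o a x i| <= K * M *+ a + K.
Proof.
move=> PK xM; apply: le_trans (ler_normD _ _) (lerD _ (PK _)).
apply: le_trans (ler_norm_sum _ _ _) _.
rewrite -[a in _ *+ a]card_ord -sumr_const; apply: ler_sum => l _.
by rewrite normrM ler_pM // xM.
Qed.

Lemma relu_tail_bounded (K : R) ws a (M : R) : exists B : R,
  forall (P : nat -> R) o (x : nat -> R), (forall k, `|P k| <= K) ->
    (forall l, (l < a)%N -> `|x l| <= M) -> `|relu_tail P a ws o x| <= B.
Proof.
elim: ws a M => [|b ws IH] a M /=.
  by exists (K * M *+ a + K) => *; exact: normr_affine_layer_le.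
have [B HB] := IH b (K * M *+ a + K).
exists B => P o x PK xM; apply: HB => // l _.
by apply: le_trans (normr_relu_le _) _; exact: normr_affine_layer_le.
Qed.

Lemma hnn_eval_bounded d ns (K : R) : exists B : R,
  forall (P : nat -> R) x, (forall k, `|P k| <= K) -> `|hnn_eval d ns P x| <= B.
Proof.
case: ns => [|n1 ns] /=; first by exists 0 => *; rewrite normr0.
have [B HB] := relu_tail_bounded K ns n1 1.
by exists B => P x PK; apply: HB => // l _; exact: normr_heaviside_le1.
Qed.

End network_bounds.

Section row_coordinates.
Variable R : realType.

Lemma normr_coord_of_le m (v : 'rV[R]_m) k : `|coord_of v k| <= `|v|.
Proof.
rewrite /coord_of; case: insubP => [i _ _|_]; last by rewrite normr0.
rewrite [leRHS]mx_normrE.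
exact: (le_bigmax _ (fun ij : 'I_1 * 'I_m => `|v ij.1 ij.2|) (0, i)).
Qed.

Lemma coord_ofE m (v : 'rV[R]_m) (i : 'I_m) : coord_of v i = v 0 i.
Proof. by rewrite /coord_of valK. Qed.

Lemma coord_of_ge m (v : 'rV[R]_m) k : (m <= k)%N -> coord_of v k = 0.
Proof. by move=> mk; rewrite /coord_of insubF // ltnNge mk. Qed.

Lemma coord_of_row m (f : nat -> R) :
  (forall k, (m <= k)%N -> f k = 0) -> coord_of (\row_(k < m) f k) = f.
Proof.
move=> f0; apply/funext => k; have [km|mk] := ltnP k m; last by rewrite coord_of_ge ?f0.
by rewrite -[k]/(val (Ordinal km)) coord_ofE mxE.
Qed.

Lemma cvg_coord_of m (u : nat -> 'rV[R]_m) v k :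
  u @ \oo --> v -> coord_of (u n) k @[n --> \oo] --> coord_of v k.
Proof.
rewrite /coord_of; case: insubP => [i _ _ /cvg_ballP uv|_ _]; last exact: cvg_cst.
apply/cvg_ballP => e e_gt0.
by apply: filterS (uv e e_gt0) => n [_ /(_ 0 i)].
Qed.

Lemma cvg_coord_of_bounded m (u : nat -> 'rV[R]_m) v : u @ \oo --> v ->
  exists K, forall k, `|coord_of v k| <= K /\ forall n, `|coord_of (u n) k| <= K.
Proof.
move=> uv; have [M [_ uM]] := cvg_seq_bounded (cvgP _ uv).
exists (Num.max (M + 1) `|v|) => k; split.
  by apply: le_trans (normr_coord_of_le _ _) _; rewrite le_max lexx orbT.
move=> n; apply: le_trans (normr_coord_of_le _ _) _.
by rewrite le_max uM ?ltrDl.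
Qed.

End row_coordinates.

Section bounded_convergence.
Local Open Scope ereal_scope.
Context (R : realType) dT (T : measurableType dT) (mu : measure T R).

Lemma bounded_cvg_integral_sqr_sub (A : set T) (f_ : nat -> T -> R) (f : T -> R) (B : R) :
  measurable A -> mu A < +oo ->
  (forall n, measurable_fun [set: T] (f_ n)) -> measurable_fun [set: T] f ->
  (forall n t, (`|f_ n t| <= B)%R) -> (forall t, (`|f t| <= B)%R) ->
  {ae mu, forall t, f_ n t @[n --> \oo] --> f t} ->
  \int[mu]_t (\1_A t * (f_ n t - f t) ^+ 2)%:E @[n --> \oo] --> 0.
Proof.
move=> mA muA mf_ mf f_B fB f_f.
have indic_ge0 t : (0 <= \1_A t :> R)%R by rewrite indicE.
pose h n t := (\1_A t * (f_ n t - f t) ^+ 2)%:E.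
pose g t := ((2 * B) ^+ 2)%:E * (\1_A t)%:E.
have mh n : measurable_fun [set: T] (h n).
  apply/measurable_EFinP/measurable_funM; first exact: measurable_indic.
  exact/measurable_funX/measurable_funB.
have h_cvg0 : {ae mu, forall t, [set: T] t -> h n t @[n --> \oo] --> (cst 0 t : \bar R)}.
  apply: filterS f_f => t f_ft _; apply: cvg_EFin; first exact: nearW.
  have sqr_cvg0 : ((f_ n t - f t) ^+ 2)%R @[n --> \oo] --> 0%R.
    rewrite -(mulr0 0%R); under eq_cvg do rewrite expr2.
    by apply: cvgM; rewrite -(subrr (f t)); apply: cvgB f_ft (cvg_cst _).
  rewrite /comp /h /= -(mulr0 (\1_A t)).
  by apply: cvgM; [exact: cvg_cst | exact: sqr_cvg0].
have g_int : mu.-integrable [set: T] g.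
  apply: integrableZl => //; apply/integrableP; split.
    by apply/measurable_EFinP; exact: measurable_indic.
  under eq_integral do rewrite gee0_abs ?lee_fin //.
  by rewrite integral_indic // setIT.
have h_le_g : {ae mu, forall t n, [set: T] t -> `|h n t| <= g t}.
  apply: aeW => t n _; rewrite /h /g -EFinM gee0_abs; last first.
    by rewrite lee_fin mulr_ge0 ?sqr_ge0.
  rewrite lee_fin mulrC ler_wpM2r //.
  move: (f_B n t) (fB t); rewrite !ler_norml => /andP[? ?] /andP[? ?]; nra.
have [_ _] := dominated_convergence measurableT mh (measurable_cst _) h_cvg0 g_int h_le_g.
by rewrite integral0.
Qed.

End bounded_convergence.

Definition zero_weights {R : realType} (d : nat) (P : nat -> R) (i : nat) : bool :=
  [forall l : 'I_d, P (i * d.+1 + l)%N == 0].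

Section L2_continuity.
Variable R : realType.
Local Open Scope ereal_scope.

Lemma lebesgue_integral_RdE d (g : 'rV[R]_d -> \bar R) :
  (forall x, 0 <= g x) -> measurable_fun [set: Rd R d] (g \o Rd_point) ->
  lebesgue_integral_Rd g = \int[lebesgue_Rd R d]_p g (Rd_point p).
Proof. by move=> g_ge0 mg; rewrite /lebesgue_integral_Rd iter_lebesgue_integralE. Qed.

Lemma lebesgue_measure_RdE d (A : set 'rV[R]_d) :
  measurable (Rd_point @^-1` A) ->
  lebesgue_measure_Rd A = lebesgue_Rd R d (Rd_point @^-1` A).
Proof.
move=> mA; rewrite /lebesgue_measure_Rd lebesgue_integral_RdE ?lee_fin //.
  by rewrite -(setIT (Rd_point @^-1` A)) -integral_indic.
by apply/measurable_EFinP; exact: measurable_indic.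
Qed.

Lemma hyperplane_first_layer d m (Th : 'rV[R]_m) (p : Rd R d) i :
  affine_layer (coord_of Th) 0 d (coord_of (Rd_point p)) i = 0%R <->
  hyperplane d (fun l => coord_of Th (i * d.+1 + l)%N) (coord_of Th (i * d.+1 + d)%N) p.
Proof.
rewrite /hyperplane /affine_layer /=.
by under eq_bigr do rewrite coord_of_Rd_point ltn_ord.
Qed.

Lemma L2dist2E d (Omega : set 'rV[R]_d) (f g : 'rV[R]_d -> R) :
  measurable (Rd_point @^-1` Omega) ->
  measurable_fun [set: Rd R d] (f \o Rd_point) ->
  measurable_fun [set: Rd R d] (g \o Rd_point) ->
  L2dist2 Omega f g = \int[lebesgue_Rd R d]_p
    (\1_(Rd_point @^-1` Omega) p * (f (Rd_point p) - g (Rd_point p)) ^+ 2)%:E.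
Proof.
move=> mO mf mg; rewrite /L2dist2 lebesgue_integral_RdE //.
  by move=> x; rewrite lee_fin mulr_ge0 ?sqr_ge0 // indicE.
apply/measurable_EFinP/measurable_funM; first exact: measurable_indic.
exact/measurable_funX/measurable_funB.
Qed.

Lemma cvg_L2dist2_hnn d n1 ns m (Omega : set 'rV[R]_d) (Theta0 : 'rV[R]_m)
    (Thetas : nat -> 'rV[R]_m) :
  open Omega -> lebesgue_measure_Rd Omega < +oo ->
  (forall i, (i < n1)%N -> ~~ zero_weights d (coord_of Theta0) i) ->
  Thetas @ \oo --> Theta0 ->
  L2dist2 Omega (hnn d (n1 :: ns) (Thetas n)) (hnn d (n1 :: ns) Theta0) @[n --> \oo]
    --> 0.
Proof.
move=> oO finO nz ThTh.
have mO := measurable_Rd_point_preimage oO.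
have mv (Th : 'rV[R]_m) : measurable_fun setT (hnn d (n1 :: ns) Th \o @Rd_point R d).
  by apply: measurable_hnn_eval => l; exact: measurable_coord_of_Rd_point.
have [K HK] := cvg_coord_of_bounded ThTh.
have [B HB] := hnn_eval_bounded d (n1 :: ns) K.
under eq_cvg do rewrite (L2dist2E mO (mv _) (mv _)).
apply: bounded_cvg_integral_sqr_sub => //.
- by move: finO; rewrite lebesgue_measure_RdE.
- by move=> n; exact: mv.
- exact: mv.
- by move=> n p; apply: HB => k; case: (HK k).
- by move=> p; apply: HB => k; case: (HK k).
pose N := \bigcup_i if (i < n1)%N then hyperplane d
  (fun l => coord_of Theta0 (i * d.+1 + l)%N) (coord_of Theta0 (i * d.+1 + d)%N) else set0.
have N_null : (lebesgue_Rd R d).-negligible N.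
  apply: negligible_bigcup => i; case: ifP => i_lt; last exact: negligible_set0.
  apply/negligibleP; first exact: measurable_hyperplane.
  by apply: hyperplane_null; move/forallPn: (nz i i_lt) => [l al]; exists l.
apply: (negligibleS _ N_null) => p /= p_bad; apply: contrapT => pN; apply: p_bad.
apply: cvg_hnn_eval => [k|i i_lt]; first exact: cvg_coord_of.
by apply/eqP => /hyperplane_first_layer p_hyp; apply: pN; exists i; rewrite ?i_lt.
Qed.

End L2_continuity.

Section zero_weights_subspace.
Variable R : realType.

Definition first_weights_mx m d i : 'M[R]_(m, d) :=
  \matrix_(k, l) ((k : nat) == i * d.+1 + l)%N%:R.

Definition zero_weights_vspace m d i : {vspace 'rV[R]_m} :=
  lker (linfun (mulmxr (first_weights_mx m d i))).

Lemma first_weights_mxE m d i (Th : 'rV[R]_m) l :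
  (Th *m first_weights_mx m d i) 0 l = coord_of Th (i * d.+1 + l)%N.
Proof.
rewrite mxE /coord_of; case: insubP => [k _ kE|k_ge] /=.
  rewrite (bigD1 k) //= mxE kE eqxx mulr1 big1 ?addr0 // => j jk.
  by rewrite mxE -kE (inj_eq val_inj) (negbTE jk) mulr0.
apply: big1 => j _; rewrite mxE; case: eqP => [jE|]; last by rewrite mulr0.
by rewrite -jE ltn_ord in k_ge.
Qed.

Lemma mem_zero_weights_vspace m d i (Th : 'rV[R]_m) :
  (Th \in zero_weights_vspace m d i) = zero_weights d (coord_of Th) i.
Proof.
rewrite memv_ker lfunE /=; apply/eqP/forallP => [Th0 l|Th0].
  by rewrite -first_weights_mxE Th0 mxE.
by apply/rowP => l; rewrite first_weights_mxE mxE; apply/eqP.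
Qed.

Lemma dim_zero_weights_vspace m d i :
  (i.+1 * d.+1 <= m)%N -> \dim (zero_weights_vspace m d i) = (m - d)%N.
Proof.
move=> im; rewrite /zero_weights_vspace; set f := linfun _.
(* [f] is onto: shift [y] to the positions of the weights of neuron [i]. *)
have f_onto : (f @: fullv)%VS = fullv.
  apply/eqP; rewrite eqEsubv subvf; apply/subvP => y _.
  pose g k := coord_of y (k - i * d.+1)%N * (i * d.+1 <= k)%N%:R.
  suff -> : y = f (\row_(k < m) g k) by exact/memv_img/memvf.
  apply/rowP => l; rewrite lfunE /= first_weights_mxE (coord_of_row (f := g)) => [|k mk].
    by rewrite /g addKn leq_addr mulr1 coord_ofE.
  by rewrite /g coord_of_ge ?mul0r //; lia.
have := limg_ker_dim f fullv.
by rewrite capfv f_onto !dimvf /dim /= !mul1n => dimE; rewrite -[in RHS]dimE addnK.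
Qed.

Lemma has_zero_weights_vspaceP m d n1 (Th : 'rV[R]_m) :
  reflect (exists2 i, (i < n1)%N & zero_weights d (coord_of Th) i)
    (has (fun V : {vspace 'rV[R]_m} => Th \in V)
       [seq zero_weights_vspace m d i | i <- iota 0 n1]).
Proof.
apply: (iffP hasP) => [[V /mapP[i i_in ->]]|[i i_lt zi]].
  by rewrite mem_zero_weights_vspace; exists i; rewrite // mem_iota in i_in.
exists (zero_weights_vspace m d i); last by rewrite mem_zero_weights_vspace.
by apply/mapP; exists i; rewrite ?mem_iota.
Qed.

End zero_weights_subspace.

Section network_locality.
Variable R : realType.

Lemma eq_affine_layer (P Q : nat -> R) o a (x y : nat -> R) i :
  (forall k, (o <= k)%N -> P k = Q k) -> (forall l, (l < a)%N -> x l = y l) ->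
  affine_layer P o a x i = affine_layer Q o a y i.
Proof.
move=> PQ xy; rewrite /affine_layer PQ; last by lia.
by congr (_ + _); apply: eq_bigr => l _; rewrite PQ ?xy //; lia.
Qed.

Lemma eq_relu_tail (P Q : nat -> R) ws a o (x y : nat -> R) :
  (forall k, (o <= k)%N -> P k = Q k) -> (forall l, (l < a)%N -> x l = y l) ->
  relu_tail P a ws o x = relu_tail Q a ws o y.
Proof.
elim: ws a o x y => [|b ws IH] a o x y PQ xy /=; first exact: eq_affine_layer.
apply: IH => [k ok|l _]; first by apply: PQ; lia.
by congr relu; apply: eq_affine_layer.
Qed.

End network_locality.

Section revive.
Variables (R : realType) (d n1 : nat) (M : R).
Hypothesis d_gt0 : (0 < d)%N.

(* A neuron with zero weights outputs the constant [H(b)]; on inputs with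
   [|x_0| <= M], weights [e_0] and bias [+-(M + 1)], signed like [b], give the
   same constant. *)
Definition revived_weight (P : nat -> R) i l : R :=
  if l == 0%N then 1
  else if l == d then (if 0 <= P (i * d.+1 + d)%N then M + 1 else - (M + 1))
  else 0.

Definition revive (P : nat -> R) k : R :=
  let i := (k %/ d.+1)%N in
  if (i < n1)%N && zero_weights d P i then revived_weight P i (k %% d.+1)%N else P k.

Lemma revive_index P i l : (l <= d)%N ->
  revive P (i * d.+1 + l)%N = if (i < n1)%N && zero_weights d P i
                            then revived_weight P i l else P (i * d.+1 + l)%N.
Proof.
move=> ld; rewrite /revive divnMDl // modnMDl divn_small ?modn_small ?addn0 //.
Qed.

Lemma revive_ge P k : (n1 * d.+1 <= k)%N -> revive P k = P k.
Proof.
move=> k_ge; rewrite /revive ifF // ltn_divLR // ltnNge.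
by rewrite k_ge.
Qed.

Lemma revive_nonzero P i : (i < n1)%N -> ~~ zero_weights d (revive P) i.
Proof.
move=> i_lt; apply/forallPn; case zi: (zero_weights d P i).
  exists (Ordinal d_gt0); rewrite revive_index ?i_lt ?zi //=.
  by rewrite /revived_weight eqxx oner_eq0.
have /forallPn[l al] := negbT zi; exists l.
by rewrite revive_index ?(ltnW (ltn_ord l)) // i_lt zi.
Qed.

Lemma heaviside_revive P (x : nat -> R) i : `|x 0%N| <= M -> (i < n1)%N ->
  heaviside (affine_layer (revive P) 0 d x i) = heaviside (affine_layer P 0 d x i).
Proof.
move=> xM i_lt; rewrite /affine_layer /=.
under eq_bigr => l _ do rewrite revive_index ?(ltnW (ltn_ord l)) // i_lt /=.
rewrite revive_index // i_lt /=; case zi: (zero_weights d P i) => //=.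
have -> : \sum_(l < d) P (i * d.+1 + l)%N * x l = 0.
  by apply: big1 => l _; move/forallP/(_ l)/eqP: zi => ->; rewrite mul0r.
rewrite add0r (bigD1 (Ordinal d_gt0)) //= big1 => [|l l0]; last first.
  by rewrite /revived_weight (negbTE l0 : (l == 0 :> nat) = false) ltn_eqF ?mul0r.
rewrite /revived_weight !eqxx gtn_eqF // mul1r addr0 /heaviside.
rewrite -[P (0%N + _)]/(P (i * d.+1 + d)%N).
move: xM; rewrite ler_norml => /andP[xM1 xM2].
have [b0|b0] := lerP 0 (P (i * d.+1 + d)%N).
  by rewrite ifT //; lra.
by rewrite lt_geF //; lra.
Qed.

Lemma hnn_eval_revive ns P (x : nat -> R) : `|x 0%N| <= M ->
  hnn_eval d (n1 :: ns) (revive P) x = hnn_eval d (n1 :: ns) P x.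
Proof.
move=> xM; apply: eq_relu_tail => [k|i i_lt]; first exact: revive_ge.
exact: heaviside_revive.
Qed.

End revive.

Theorem mainTheorem16 (R : realType) (d : nat) (ns : seq nat) (m : nat)
    (Omega : set 'rV[R]_d) :
  (0 < d)%N -> ns != [::] -> all (fun n => 0 < n)%N ns ->
  m = hnn_nparams d ns ->
  open Omega -> connected Omega -> Omega !=set0 ->
  (lebesgue_measure_Rd Omega < +oo)%E ->
  exists N : set 'rV[R]_m,
    [/\ (forall Theta0 : 'rV[R]_m, ~ N Theta0 ->
           forall Thetas : nat -> 'rV[R]_m, Thetas @ \oo --> Theta0 ->
             (fun n => L2dist2 Omega (hnn d ns (Thetas n)) (hnn d ns Theta0))
               @ \oo --> 0%E),
        (bounded_set Omega ->
           forall Theta : 'rV[R]_m, N Theta ->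
             exists Theta' : 'rV[R]_m, ~ N Theta' /\
               forall x, Omega x -> hnn d ns Theta x = hnn d ns Theta' x) &
        exists s : seq {vspace 'rV[R]_m},
          all (fun V => \dim V == (m - d)%N) s /\
          N = [set Theta : 'rV[R]_m | has (fun V : {vspace 'rV[R]_m} => Theta \in V) s]].
Proof.
move=> d_gt0 + _ mE oO _ _ finO; case: ns mE => [//|n1 ns] mE _.
have n1m : (n1 * d.+1 <= m)%N by rewrite mE /hnn_nparams /= leq_addr.
pose s := [seq zero_weights_vspace R m d i | i <- iota 0 n1].
exists [set Th | has (fun V : {vspace 'rV[R]_m} => Th \in V) s]; split.
- move=> Th0 Th0N Ths ThsTh0; apply: cvg_L2dist2_hnn => // i i_lt.
  by apply/negP => zi; apply: Th0N; apply/has_zero_weights_vspaceP; exists i.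
- move=> [M [_ OM]] Th _.
  pose Th' : 'rV[R]_m := \row_(k < m) revive d n1 (M + 1) (coord_of Th) k.
  have Th'E : coord_of Th' = revive d n1 (M + 1) (coord_of Th).
    by apply: coord_of_row => k mk; rewrite revive_ge ?coord_of_ge //; lia.
  exists Th'; split.
    move/has_zero_weights_vspaceP => [i i_lt]; apply/negP.
    by rewrite Th'E; exact: revive_nonzero.
  move=> x Ox; rewrite /hnn Th'E hnn_eval_revive //.
  by apply: le_trans (normr_coord_of_le _ _) (OM _ _ _ Ox); rewrite ltrDl.
- exists s; split => //; apply/allP => V /mapP[i]; rewrite mem_iota => /andP[_ i_lt] ->.
  by apply/eqP/dim_zero_weights_vspace; nia.
Qed.
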